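(* Let $b\ge 2$ and $m\ge 0$ be integers. Consider the following nondeterministic procedure. Set $\mathcal U_1=[0,1)^2$. For $n=1,2,\ldots$: if $\mathcal U_n=\emptyset$, stop; otherwise choose an arbitrary box $X_n=\prod_{j=1}^2\left[\frac{u_j(n)}{b^m},\frac{u_j(n)+1}{b^m}\right)\subseteq \mathcal U_n$ with $u_j(n)\in\{0,1,\ldots,b^m-1\}$, and set $\mathcal U_{n+1}=\mathcal U_n\setminus\bigcup_{E\in\mathcal E_m(X_n)}E$. Then, regardless of the choices made, the procedure stops after exactly $b^m$ boxes have been chosen.
   Context: An elementary $b$-adic interval in $[0,1)^s$ is a set $\prod_{j=1}^s\left[\frac{a_j}{b^{d_j}},\frac{a_j+1}{b^{d_j}}\right)$ with $d_j\in\mathbb N_0$ and $a_j\in\{0,1,\ldots,b^{d_j}-1\}$; its volume is $b^{-(d_1+\cdots+d_s)}$. For a box $X=\prod_{j=1}^s\left[\frac{u_j}{b^m},\frac{u_j+1}{b^m}\right)$, $\mathcal E_m(X)$ denotes the set of all elementary $b$-adic intervals of volume $b^{-m}$ that contain $X$ as a subset. *)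

From HB Require Import structures.
From mathcomp Require Import all_boot all_order all_algebra.
From mathcomp Require Import boolp classical_sets reals.

Import Order.TTheory GRing.Theory Num.Theory.
Local Open Scope ring_scope.
Local Open Scope classical_set_scope.

Definition unit_square (R : realType) : set (R * R) :=
  [set p | (0 <= p.1 < 1) /\ (0 <= p.2 < 1)].

Definition elem_int (R : realType) (b d1 d2 a1 a2 : nat) : set (R * R) :=
  [set p | (a1%:R / (b%:R ^+ d1) <= p.1 < a1.+1%:R / (b%:R ^+ d1)) /\
           (a2%:R / (b%:R ^+ d2) <= p.2 < a2.+1%:R / (b%:R ^+ d2))].

Definition box (R : realType) (b m u1 u2 : nat) : set (R * R) :=
  elem_int R b m m u1 u2.

(* E_m(X): elementary b-adic intervals of volume b^{-m} (i.e. d1 + d2 = m)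
   containing X. *)
Definition Em (R : realType) (b m : nat) (X : set (R * R)) : set (set (R * R)) :=
  [set E | exists d1 d2 a1 a2 : nat,
      [/\ (a1 < b ^ d1)%N, (a2 < b ^ d2)%N, (d1 + d2)%N = m,
          E = elem_int R b d1 d2 a1 a2 & X `<=` E]].

(* The sets U_{n+1} of the procedure (0-indexed: Useq 0 = U_1), given the
   sequence of choices u n = (u_1(n+1), u_2(n+1)) of the box X_{n+1}. *)
Fixpoint Useq (R : realType) (b m : nat) (u : nat -> nat * nat) (n : nat)
  : set (R * R) :=
  match n with
  | 0 => unit_square R
  | n'.+1 => Useq R b m u n' `\`
             \bigcup_(E in Em R b m (box R b m (u n').1 (u n').2)) E
  end.

(* Two boxes lie in a
   common elementary interval of volume b^-m iff they are [linked]: for some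
   d <= m they agree on the leading d base-b digits of the column and on the
   leading m - d digits of the row.  A step of the procedure removes exactly
   the boxes linked to the chosen one, so the chosen boxes are pairwise
   unlinked, and the procedure stops once every box is linked to a chosen one.
   Unlinked boxes lie in distinct columns (take d = m), so at most b^m boxes
   are chosen, and b^m of them fill every column and thus cover the square.
   If fewer are chosen, pick a row y missed by all of them and build a column
   digit by digit: at step t, the chosen boxes that agree with the partial
   column on t digits and with y on m - t - 1 digits have pairwise distinct
   t-th row digits, all different from that of y; so there are fewer than b
   of them and some next column digit avoids them all. *)

From HB Require Import structures.
From mathcomp Require Import all_boot all_order all_algebra.
From mathcomp Require Import boolp classical_sets reals.
From mathcomp Require Import zify.
Import Order.TTheory GRing.Theory Num.Theory.
Local Open Scope classical_set_scope.

Set Implicit Arguments.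
Unset Strict Implicit.
Unset Printing Implicit Defensive.

Definition ancestor (B m d : nat) (c : nat * nat) : nat * nat :=
  (c.1 %/ B ^ (m - d), c.2 %/ B ^ d).

Definition linked (B m : nat) (c v : nat * nat) : Prop :=
  exists2 d, d <= m & ancestor B m d c = ancestor B m d v.

Lemma linked_sym B m c v : linked B m c v -> linked B m v c.
Proof. by case=> d hd e; exists d. Qed.

Lemma linked_same_column B m c v :
  c.2 < B ^ m -> v.2 < B ^ m -> c.1 = v.1 -> linked B m c v.
Proof.
move=> hc hv e; exists m => //.
by rewrite /ancestor subnn expn0 !divn1 !divn_small // e.
Qed.

Lemma exists_notin_iota (s : seq nat) n :
  size s < n -> exists2 a, a < n & a \notin s.
Proof.
move=> hs; have [all_in | /allPn [a]] := boolP (all (mem s) (iota 0 n)).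
  have := uniq_leq_size (iota_uniq 0 n) (allP all_in).
  by rewrite size_iota leqNgt hs.
by rewrite mem_iota add0n; exists a.
Qed.

Lemma divn_expS_digit B t n : 0 < B ->
  n %/ B ^ t = n %/ B ^ t.+1 * B + n %/ B ^ t %% B.
Proof. by move=> hB; rewrite expnSr divnMA; apply: divn_eq. Qed.

Section Packing.
Variables (B m k : nat) (u : nat -> nat * nat).
Hypothesis B_gt0 : 0 < B.
Hypothesis u_grid : forall i, i < k -> (u i).1 < B ^ m /\ (u i).2 < B ^ m.
Hypothesis u_unlinked :
  forall i j, i < k -> j < k -> i <> j -> ~ linked B m (u i) (u j).

Let columns := map (fun i => (u i).1) (iota 0 k).

Let columns_uniq : uniq columns.
Proof.
rewrite map_inj_in_uniq ?iota_uniq // => i j; rewrite !mem_iota /= => hi hj e.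
apply/eqP; apply: contraT => /eqP hij; case: (u_unlinked hi hj hij).
by apply: linked_same_column; [exact: (u_grid hi).2 | exact: (u_grid hj).2 |].
Qed.

Let columns_sub : {subset columns <= iota 0 (B ^ m)}.
Proof. by move=> x /mapP [i]; rewrite !mem_iota /= => hi ->; exact: (u_grid hi).1. Qed.

Lemma packing_size : k <= B ^ m.
Proof.
by have := uniq_leq_size columns_uniq columns_sub; rewrite size_map !size_iota.
Qed.

Lemma full_packing_covers c : k = B ^ m -> c.1 < B ^ m -> c.2 < B ^ m ->
  exists2 i, i < k & linked B m c (u i).
Proof.
move=> ek hc1 hc2.
have [|_ columns_all] := uniq_min_size columns_uniq columns_sub.
  by rewrite size_map !size_iota ek.
have /mapP [i] : c.1 \in columns by rewrite columns_all mem_iota.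
rewrite mem_iota /= => hi e; exists i => //.
by apply: linked_same_column => //; exact: (u_grid hi).2.
Qed.

Section FreshRow.
Variable y0 : nat.
Hypothesis y0_fresh : forall i, i < k -> (u i).2 <> y0.

(* [al] stands for the leading [t] base-[B] digits of a column being built
   digit by digit for the row [y0]. *)
Definition avoids t al := forall i d, i < k -> d <= t ->
  ~ ((u i).1 %/ B ^ (m - d) = al %/ B ^ (t - d) /\ (u i).2 %/ B ^ d = y0 %/ B ^ d).

Lemma avoids0 : avoids 0 0.
Proof.
move=> i d hi; rewrite leqn0 => /eqP -> [_].
by rewrite !expn0 !divn1; apply: y0_fresh.
Qed.

Definition candidates t al := [seq i <- iota 0 k |
  ((u i).1 %/ B ^ (m - t) == al) && ((u i).2 %/ B ^ t.+1 == y0 %/ B ^ t.+1)].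

Lemma mem_candidates t al i : (i \in candidates t al) =
  [&& i < k, (u i).1 %/ B ^ (m - t) == al & (u i).2 %/ B ^ t.+1 == y0 %/ B ^ t.+1].
Proof. by rewrite mem_filter mem_iota /= andbC. Qed.

(* The candidates have pairwise distinct [t]-th digits in the row, all
   different from that of [y0]. *)
Lemma size_candidates t al : t < m -> avoids t al -> size (candidates t al) < B.
Proof.
move=> ltm av; pose digit n := n %/ B ^ t %% B.
have digit_inj : {in candidates t al &, injective (fun i => digit (u i).2)}.
  move=> i j; rewrite !mem_candidates => /and3P [hi /eqP x_i /eqP y_i].
  move=> /and3P [hj /eqP x_j /eqP y_j] e; apply/eqP; apply: contraT => /eqP hij.
  case: (u_unlinked hi hj hij); exists t; first exact: ltnW.
  rewrite /ancestor x_i x_j (@divn_expS_digit _ t (u i).2 B_gt0).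
  by rewrite (@divn_expS_digit _ t (u j).2 B_gt0) y_i y_j -/(digit _) e.
have digits_sub : {subset map (fun i => digit (u i).2) (candidates t al)
                    <= rem (digit y0) (iota 0 B)}.
  move=> c /mapP [i]; rewrite mem_candidates => /and3P [hi /eqP x_i /eqP y_i] ->.
  rewrite mem_rem_uniq ?iota_uniq // !inE mem_iota /= ltn_mod B_gt0 andbT.
  apply: contra_notN (av i t hi (leqnn t)) => /eqP e.
  rewrite subnn expn0 divn1 x_i (@divn_expS_digit _ t (u i).2 B_gt0).
  by rewrite (@divn_expS_digit _ t y0 B_gt0) y_i -/(digit _) e.
have digits_uniq : uniq (map (fun i => digit (u i).2) (candidates t al)).
  by rewrite (map_inj_in_uniq digit_inj) filter_uniq ?iota_uniq.
have := uniq_leq_size digits_uniq digits_sub.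
rewrite size_map size_rem ?size_iota; last by rewrite mem_iota /= ltn_mod.
by move/leq_ltn_trans; apply; rewrite ltn_predL.
Qed.

Lemma avoidsS t al : t < m -> avoids t al ->
  exists2 a, a < B & avoids t.+1 (al * B + a).
Proof.
move=> ltm av; pose digit n := n %/ B ^ (m - t.+1) %% B.
have [|a ha a_fresh] :=
  @exists_notin_iota (map (fun i => digit (u i).1) (candidates t al)) B.
  by rewrite size_map size_candidates.
exists a => // i d hi hd [x_i y_i].
have top_al : (al * B + a) %/ B = al by rewrite divnMDl // divn_small // addn0.
have [ltd | ged] := ltnP d t.+1.
  apply: (av i d hi ltd); split => //.
  by rewrite x_i subSn // expnS divnMA top_al.
have ed : d = t.+1 by apply/eqP; rewrite eqn_leq hd.
move: x_i y_i; rewrite ed subnn expn0 divn1 => x_i y_i.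
move/negP: a_fresh; apply; apply/mapP; exists i; last first.
  by rewrite /digit x_i modnMDl modn_small.
rewrite mem_candidates hi y_i eqxx andbT /=.
by rewrite -subnSK // expnS mulnC divnMA x_i top_al.
Qed.

Lemma avoids_exists t : t <= m -> exists2 al, al < B ^ t & avoids t al.
Proof.
elim: t => [_ | t IH ltm]; first by exists 0; [rewrite expn0 | exact: avoids0].
have [al hal av] := IH (ltnW ltm).
have [a ha avS] := avoidsS ltm av.
by exists (al * B + a) => //; rewrite expnSr; nia.
Qed.

End FreshRow.

Lemma packing_extendable : k < B ^ m -> exists c : nat * nat,
  [/\ c.1 < B ^ m, c.2 < B ^ m & forall i, i < k -> ~ linked B m c (u i)].
Proof.
move=> ltk; have [|y0 hy0 y0_notin] :=
  @exists_notin_iota (map (fun i => (u i).2) (iota 0 k)) (B ^ m).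
  by rewrite size_map size_iota.
have y0_fresh i : i < k -> (u i).2 <> y0.
  by move=> hi e; move/negP: y0_notin; apply; apply/mapP; exists i; rewrite ?mem_iota.
have [x0 hx0 av] := @avoids_exists y0 y0_fresh m (leqnn m).
exists (x0, y0); split => // i hi [d hd [x_e y_e]].
exact: (av i d hi hd (conj (esym x_e) (esym y_e))).
Qed.

End Packing.

Section Grid.
Variables (R : realType) (b m : nat).
Local Open Scope ring_scope.
Hypothesis b_gt0 : (0 < b)%N.

Definition cell_index (x : R) : nat := Num.truncn (x * b%:R ^+ m).

Let bR_gt0 : 0 < b%:R :> R. Proof. by rewrite ltr0n. Qed.

Lemma elem_coordE (x : R) a d : (d <= m)%N -> 0 <= x ->
  (a%:R / b%:R ^+ d <= x < a.+1%:R / b%:R ^+ d) = (a == cell_index x %/ b ^ (m - d))%N.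
Proof.
move=> hd hx; have bd_gt0 : 0 < b%:R ^+ d :> R by rewrite exprn_gt0.
have bmd_gt0 : 0 < b%:R ^+ (m - d) :> R by rewrite exprn_gt0.
have bmE : b%:R ^+ m = b%:R ^+ d * b%:R ^+ (m - d) :> R by rewrite -exprD subnKC.
rewrite eqn_leq leq_divRL ?expn_gt0 ?b_gt0 //.
rewrite -[(_ %/ _ <= a)%N]ltnS ltn_divLR ?expn_gt0 ?b_gt0 //.
have xbm_ge0 : 0 <= x * b%:R ^+ m by rewrite mulr_ge0 // exprn_ge0 // ltW.
rewrite truncn_ge_nat // truncn_lt_nat // ler_pdivrMr // ltr_pdivlMr //.
by rewrite !natrM !natrX bmE mulrA ler_pM2r // ltr_pM2r.
Qed.

Lemma cell_indexE (x : R) a : 0 <= x ->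
  (a%:R / b%:R ^+ m <= x < a.+1%:R / b%:R ^+ m) = (a == cell_index x).
Proof. by move=> hx; rewrite elem_coordE // subnn expn0 divn1. Qed.

Lemma corner_ge0 a d : 0 <= a%:R / b%:R ^+ d :> R.
Proof. by rewrite divr_ge0 // exprn_ge0 // ltW. Qed.

Lemma cell_index_corner a : cell_index (a%:R / b%:R ^+ m) = a.
Proof.
apply/esym/eqP; rewrite -cell_indexE ?corner_ge0 // lexx.
by rewrite /= ltr_pM2r ?invr_gt0 ?exprn_gt0 // ltr_nat.
Qed.

Lemma cell_index_lt (x : R) : 0 <= x < 1 -> (cell_index x < b ^ m)%N.
Proof.
case/andP=> x_ge0 x_lt1.
rewrite truncn_lt_nat; last by rewrite mulr_ge0 // exprn_ge0 // ltW.
by rewrite natrX -[X in _ < X]mul1r ltr_pM2r // exprn_gt0.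
Qed.

Definition cell (p : R * R) : nat * nat := (cell_index p.1, cell_index p.2).

Definition corner (c : nat * nat) : R * R := (c.1%:R / b%:R ^+ m, c.2%:R / b%:R ^+ m).

Lemma corner_unit_square c : (c.1 < b ^ m)%N -> (c.2 < b ^ m)%N ->
  unit_square R (corner c).
Proof.
have corner_lt1 a : (a < b ^ m)%N -> a%:R / b%:R ^+ m < 1 :> R.
  by move=> ha; rewrite ltr_pdivrMr ?exprn_gt0 // mul1r -natrX ltr_nat.
by move=> c1 c2; split; rewrite /= corner_ge0 corner_lt1.
Qed.

Lemma cell_corner c : cell (corner c) = c.
Proof. by rewrite /cell /= !cell_index_corner; case: c. Qed.

Lemma elem_int_ge0 d1 d2 a1 a2 p :
  elem_int R b d1 d2 a1 a2 p -> 0 <= p.1 /\ 0 <= p.2.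
Proof.
case=> /andP [h1 _] /andP [h2 _].
by split; [apply: le_trans h1 | apply: le_trans h2]; apply: corner_ge0.
Qed.

Lemma elem_intE d a p : (d <= m)%N -> 0 <= p.1 -> 0 <= p.2 ->
  elem_int R b d (m - d) a.1 a.2 p <-> a = ancestor b m d (cell p).
Proof.
move=> hd p1 p2; rewrite /elem_int /= !elem_coordE ?leq_subr // subKn //.
by case: a => a1 a2 /=; split => [[/eqP -> /eqP ->] | [-> ->]].
Qed.

Lemma box_cell c p : box R b m c.1 c.2 p -> cell p = c.
Proof.
case: c => c1 c2 inX; have [p1 p2] := elem_int_ge0 inX; case: inX.
by rewrite /= !cell_indexE // => /eqP -> /eqP ->.
Qed.

Lemma corner_in_box c : box R b m c.1 c.2 (corner c).
Proof.
by split; rewrite /= cell_indexE ?corner_ge0 ?cell_index_corner.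
Qed.

Lemma bigcup_EmE c p : (c.1 < b ^ m)%N -> (c.2 < b ^ m)%N ->
  (\bigcup_(E in Em R b m (box R b m c.1 c.2)) E) p <->
  [/\ 0 <= p.1, 0 <= p.2 & linked b m (cell p) c].
Proof.
move=> c1 c2; split.
  case=> _ [d1 [d2 [a1 [a2 [_ _ dsum -> XsubE]]]]] inE.
  have hd : (d1 <= m)%N by rewrite -dsum leq_addr.
  have {dsum} d2E : d2 = (m - d1)%N by rewrite -dsum addKn.
  rewrite {}d2E in inE XsubE.
  have [p1 p2] := elem_int_ge0 inE.
  have [q1 q2] := elem_int_ge0 (corner_in_box c).
  have eP := (@elem_intE _ (a1, a2) _ hd p1 p2).1 inE.
  have eC := (@elem_intE _ (a1, a2) _ hd q1 q2).1 (XsubE _ (corner_in_box c)).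
  by split => //; exists d1; rewrite // -eP eC cell_corner.
case=> p1 p2 [d hd e].
exists (elem_int R b d (m - d) (ancestor b m d c).1 (ancestor b m d c).2).
  exists d, (m - d)%N, (ancestor b m d c).1, (ancestor b m d c).2; split.
  - by rewrite ltn_divLR ?expn_gt0 ?b_gt0 // -expnD subnKC.
  - by rewrite ltn_divLR ?expn_gt0 ?b_gt0 // -expnD subnK.
  - exact: subnKC.
  - by [].
  move=> q Xq; have [q1 q2] := elem_int_ge0 Xq.
  by apply/elem_intE => //; rewrite (box_cell Xq).
by apply/elem_intE => //; rewrite e.
Qed.

Lemma Useq_cells u n p :
  (forall i, (i < n)%N -> ((u i).1 < b ^ m)%N /\ ((u i).2 < b ^ m)%N) ->
  Useq R b m u n p <->
  unit_square R p /\ forall i, (i < n)%N -> ~ linked b m (cell p) (u i).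
Proof.
elim: n => [_ | n IH u_grid] /=; first by split => [|[]].
have [un1 un2] := u_grid n (ltnSn n).
have {}IH := IH (fun i hi => u_grid i (leqW hi)).
split.
  case=> /IH [sq unl] notE; split => // i; rewrite ltnS leq_eqVlt.
  case/predU1P => [-> l | ]; last exact: unl.
  case: sq => /andP [p1 _] /andP [p2 _].
  by apply: notE; apply/bigcup_EmE.
case=> sq unl; split; first by apply/IH; split => // i hi; apply/unl/leqW.
by case/bigcup_EmE => // _ _; apply: unl.
Qed.

Lemma legal_run_unlinked u k :
  (forall n, (n < k)%N ->
     [/\ ((u n).1 < b ^ m)%N, ((u n).2 < b ^ m)%N &
         box R b m (u n).1 (u n).2 `<=` Useq R b m u n]) ->
  forall i j, (i < k)%N -> (j < k)%N -> i <> j -> ~ linked b m (u i) (u j).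
Proof.
move=> legal.
suff earlier n i : (n < k)%N -> (i < n)%N -> ~ linked b m (u n) (u i).
  move=> i j hi hj; case: (ltngtP i j) => // [ltij | ltji] _.
    by move/linked_sym; apply: earlier.
  exact: earlier.
move=> hn hi; have [_ _ XsubU] := legal n hn.
have /Useq_cells [|_ unl] := XsubU _ (corner_in_box (u n)).
  by move=> j hj; have [] := legal j (ltn_trans hj hn).
by rewrite cell_corner in unl; apply: unl.
Qed.

End Grid.

Theorem mainTheorem5 (R : realType) (b m : nat) (hb : (2 <= b)%N)
  (u : nat -> nat * nat) (k : nat) :
  (forall n, (n < k)%N ->
     [/\ ((u n).1 < b ^ m)%N, ((u n).2 < b ^ m)%N &
         box R b m (u n).1 (u n).2 `<=` Useq R b m u n]) ->
  (Useq R b m u k = set0 <-> k = (b ^ m)%N).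
Proof.
move=> legal; have b_gt0 : (0 < b)%N by apply: leq_trans hb.
have u_grid i : (i < k)%N -> ((u i).1 < b ^ m)%N /\ ((u i).2 < b ^ m)%N.
  by move=> hi; have [] := legal i hi.
have unl := legal_run_unlinked b_gt0 legal.
split => [U0 | ek].
  apply/eqP; rewrite eqn_leq (packing_size u_grid unl) /=.
  apply: contraT; rewrite -ltnNge => ltk.
  have [c [c1 c2 unl_c]] := packing_extendable b_gt0 u_grid unl ltk.
  have : Useq R b m u k (corner R b m c).
    apply/(Useq_cells b_gt0) => //; rewrite cell_corner //.
    by split => //; apply: corner_unit_square.
  by rewrite U0.
apply/seteqP; split => // p /(Useq_cells b_gt0 _ u_grid) [[sq1 sq2] unl_p].
have [i hi] := full_packing_covers u_grid unl (c := cell b m p) ek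
  (cell_index_lt m b_gt0 sq1) (cell_index_lt m b_gt0 sq2).
exact: unl_p.
Qed.
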